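(* Suppose that for each topological space $X$ a family $\mathbb{A}_X\subseteq\mathcal{P}(X)$ is given such that (a) $\mathbb{A}_X$ is an ideal; (b) if $Z\subseteq X$ then $\mathbb{A}_Z\subseteq\mathbb{A}_X$; (c) if $U\subseteq X$ is open then $\mathbb{A}_U=\{A\cap U:A\in\mathbb{A}_X\}$. If $X=Y\cup Z$ where the subspaces $Y$ and $Z$ are both $\mathbb{A}$-separable, then $X$ is $\mathbb{A}$-separable.
   Context: Given such an assignment $X\mapsto\mathbb{A}_X$, a space $X$ is $\mathbb{A}$-separable if for every sequence $\{D_n:n<\omega\}$ of dense subsets of $X$ there are sets $A_n\in\mathcal{P}(D_n)\cap\mathbb{A}_X$ ($n<\omega$) such that $\bigcup_{n<\omega}A_n$ is dense in $X$. *)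

From HB Require Import structures.
From mathcomp Require Import all_boot all_classical topology.
Set Implicit Arguments. Unset Strict Implicit. Unset Printing Implicit Defensive.
Local Open Scope classical_set_scope.

(* Subspaces of the ambient topological space T are represented by subsets
   W : set T carrying the subspace topology. *)
Section Defs.
Variable T : topologicalType.

Definition rel_open (W U : set T) : Prop := exists V : set T, open V /\ U = V `&` W.

(* D is a dense subset of the subspace W (closure in the subspace W is
   closure in T intersected with W) *)
Definition dense_in (W D : set T) : Prop := D `<=` W /\ W `<=` closure D.

Definition is_ideal (I : set (set T)) : Prop :=
  I set0 /\
  (forall A B, I A -> B `<=` A -> I B) /\
  (forall A B, I A -> I B -> I (A `|` B)).

Definition A_separable (Afam : set T -> set (set T)) (W : set T) : Prop :=
  forall D : nat -> set T, (forall n, dense_in W (D n)) ->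
  exists A : nat -> set T,
    (forall n, A n `<=` D n /\ Afam W (A n)) /\
    dense_in W (\bigcup_n A n).
End Defs.

From mathcomp Require Import all_boot all_classical topology.
Set Implicit Arguments. Unset Strict Implicit. Unset Printing Implicit Defensive.
Local Open Scope classical_set_scope.

(* Let D_n be dense in X = Y ∪ Z, write D_{≥n} for the union of
   the D_m with m ≥ n, and C^Y_n for the closure of D_{≥n} ∩ Y.  The set
   (D_{≥n} ∩ Y) ∪ (Y \ C^Y_n) is dense in Y, so Y-separability selects sets
   A^Y_n in it, in the ideal of Y, with dense union in Y; likewise for Z.  Keep
   the points of A^Y_k ∪ A^Z_k (k ≤ m) that lie in D_m;
   by (a) and (b) this is a set of A_X contained in D_m.  A nonempty open set O
   contained in every C^Y_n meets the union of the A^Y_n, and such a point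
   cannot lie in Y \ C^Y_k, so it lies in some D_m with m ≥ k and is kept.
   Otherwise O \ C^Y_n is nonempty for some n, and then it is contained in every
   C^Z_k, because C^Y_n ∪ C^Z_k contains the closure of D_{max n k} = X. *)

Section Closure.
Variable T : topologicalType.

Lemma closure_open_meets (A O : set T) :
  open O -> closure A `&` O !=set0 -> A `&` O !=set0.
Proof. by move=> oO [x [clAx Ox]]; apply: clAx; exact: open_nbhs_nbhs. Qed.

Lemma dense_in_open_meets (W D O : set T) :
  dense_in W D -> open O -> W `&` O !=set0 -> D `&` O !=set0.
Proof.
move=> [_ WD] oO [x [Wx Ox]]; apply: closure_open_meets => //.
by exists x; split => //; exact: WD.
Qed.

End Closure.

Lemma ideal_bigcup_ord (T : topologicalType) (I : set (set T)) (S : nat -> set T) n :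
  is_ideal I -> (forall k, I (S k)) -> I (\bigcup_(k < n) S k).
Proof.
move=> [I0 [_ IU]] IS; rewrite bigcup_mkord.
by elim/big_ind: _ => // A B; exact: IU.
Qed.

Section Tails.
Variables (T : topologicalType) (D : nat -> set T).

Definition tail n := \bigcup_(m in [set m | (n <= m)%N]) D m.

Definition tail_or_away (Y : set T) n :=
  (tail n `&` Y) `|` (Y `\` closure (tail n `&` Y)).

Definition diag_select (S : nat -> set T) m := D m `&` \bigcup_(k < m.+1) S k.

Lemma dense_tail_or_away Y n : dense_in Y (tail_or_away Y n).
Proof.
split=> [x [[]|[]] //|y Yy].
have [clTy|nclTy] := pselect (closure (tail n `&` Y) y).
  by apply: closureS clTy => x Tx; left.
by apply: subset_closure; right.
Qed.

Lemma diag_selectS (S S' : nat -> set T) m :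
  (forall k, S k `<=` S' k) -> diag_select S m `<=` diag_select S' m.
Proof. by move=> SS' x [Dx [k kn Skx]]; split=> //; exists k => //; exact: SS'. Qed.

Lemma tail_diag_select (S : nat -> set T) k x :
  S k x -> tail k x -> (\bigcup_m diag_select S m) x.
Proof. by move=> Skx [m /= km Dmx]; exists m => //; split=> //; exists k. Qed.

Lemma closure_tails_cover (Y Z : set T) n k :
  (forall m, dense_in setT (D m)) -> Y `|` Z = setT ->
  closure (tail n `&` Y) `|` closure (tail k `&` Z) = setT.
Proof.
move=> denseD YZ; rewrite -closureU; apply/seteqP; split=> // x _.
apply: (closureS _ ((denseD (maxn n k)).2 x I)) => y Dy.
have Ty (j : nat) : (j <= maxn n k)%N -> tail j y by exists (maxn n k).
have : setT y by []; rewrite -YZ => -[Yy|Zy].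
  by left; split=> //; apply: Ty; exact: leq_maxl.
by right; split=> //; apply: Ty; exact: leq_maxr.
Qed.

Section Selection.
Variables (Y : set T) (S : nat -> set T).
Hypothesis S_tail : forall k, S k `<=` tail_or_away Y k.
Hypothesis S_dense : dense_in Y (\bigcup_k S k).

Lemma open_in_tails_meets_select (O : set T) :
  open O -> O !=set0 -> (forall n, O `<=` closure (tail n `&` Y)) ->
  (\bigcup_m diag_select S m) `&` O !=set0.
Proof.
move=> oO [x Ox] OclT.
have [y [Yy Oy]] : Y `&` O !=set0.
  apply: closure_open_meets => //; exists x; split=> //.
  by apply: closureS (OclT 0%N x Ox) => z [].
have [v [[k _ Skv] Ov]] := dense_in_open_meets S_dense oO (ex_intro _ y (conj Yy Oy)).
exists v; split=> //.
case: (S_tail Skv) => [[Tv _]|[_ nclTv]]; first exact: tail_diag_select Skv Tv.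
by case: nclTv; exact: OclT.
Qed.

End Selection.

Lemma open_meets_diag_select (Y Z : set T) (SY SZ : nat -> set T) (O : set T) :
  Y `|` Z = setT -> (forall m, dense_in setT (D m)) ->
  (forall k, SY k `<=` tail_or_away Y k) -> dense_in Y (\bigcup_k SY k) ->
  (forall k, SZ k `<=` tail_or_away Z k) -> dense_in Z (\bigcup_k SZ k) ->
  open O -> O !=set0 ->
  (\bigcup_m diag_select (fun k => SY k `|` SZ k) m) `&` O !=set0.
Proof.
move=> YZ denseD SYt SYd SZt SZd oO O0.
have selectSY m : diag_select SY m `<=` diag_select (fun k => SY k `|` SZ k) m.
  by apply: diag_selectS => k x; left.
have selectSZ m : diag_select SZ m `<=` diag_select (fun k => SY k `|` SZ k) m.
  by apply: diag_selectS => k x; right.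
have [OclY|/existsNP [n /nonsubset O'0]] :=
  pselect (forall n, O `<=` closure (tail n `&` Y)).
  apply: subsetI_neq0 (open_in_tails_meets_select SYt SYd oO O0 OclY) => //.
  by move=> x [m _ /selectSY]; exists m.
have oO' : open (O `&` ~` closure (tail n `&` Y)).
  by apply: openI => //; apply: closed_openC; exact: closed_closure.
have O'clZ k : O `&` ~` closure (tail n `&` Y) `<=` closure (tail k `&` Z).
  move=> x [_ nclYx]; have : setT x by [].
  by rewrite -(closure_tails_cover n k denseD YZ) => -[].
apply: subsetI_neq0 (open_in_tails_meets_select SZt SZd oO' O'0 O'clZ).
  by move=> x [m _ /selectSZ]; exists m.
by move=> x [].
Qed.

End Tails.

Theorem theorem3p13 (T : topologicalType) (Afam : set T -> set (set T))
  (Hsub : forall W A, Afam W A -> A `<=` W)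
  (Ha : forall W, is_ideal (Afam W))
  (Hb : forall Z W, Z `<=` W -> Afam Z `<=` Afam W)
  (Hc : forall W U, U `<=` W -> rel_open W U ->
          Afam U = [set A `&` U | A in Afam W])
  (Y Z : set T) (HX : Y `|` Z = setT) :
  A_separable Afam Y -> A_separable Afam Z -> A_separable Afam setT.
Proof.
move=> sepY sepZ D denseD.
have [SY [SYp SYd]] := sepY _ (dense_tail_or_away D Y).
have [SZ [SZp SZd]] := sepZ _ (dense_tail_or_away D Z).
pose S k := SY k `|` SZ k.
have [_ [Idown IU]] := Ha setT.
exists (diag_select D S); split.
  move=> m; split; first by move=> x [].
  apply: (Idown _ _ _ (@subIsetr _ _ _)); apply: ideal_bigcup_ord => // k.
  by apply: IU; [apply: Hb (SYp k).2 | apply: Hb (SZp k).2].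
split=> // x _ B; rewrite nbhsE => -[O [oO Ox] OB].
apply: subsetI_neq0 (open_meets_diag_select HX denseD _ SYd _ SZd oO _) => //.
- by move=> k; exact: (SYp k).1.
- by move=> k; exact: (SZp k).1.
- by exists x.
Qed.
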